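(* Let $G$ be a cubic graph and let $M$ be a perfect matching cut of $G$. Let $C_1, C_2$ be two vertex-disjoint induced $4$-vertex cycles of $G$ such that there is an edge of $G$ between $V(C_1)$ and $V(C_2)$. Then $E(C_1) \cap M \neq \emptyset$ if and only if $E(C_2) \cap M \neq \emptyset$.
   Context: All graphs are finite, simple and undirected; a graph is cubic if every vertex has exactly three neighbours. A cutset of $G$ is a set $M \subseteq E(G)$ for which there is a bipartition $X \uplus Y = V(G)$ into two nonempty sets such that $M$ is exactly the set of edges with one endpoint in $X$ and one in $Y$. A perfect matching cut is a perfect matching (a set of edges covering every vertex exactly once) that is also a cutset. For a subgraph $C$, $E(C)$ and $V(C)$ denote its edge set and vertex set. *)

From mathcomp Require Import all_boot.
Set Implicit Arguments. Unset Strict Implicit. Unset Printing Implicit Defensive.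

Definition simple_graph (T : finType) (g : rel T) : Prop :=
  irreflexive g /\ symmetric g.

Definition edges (T : finType) (g : rel T) : {set {set T}} :=
  [set E : {set T} | [exists x, exists y, g x y && (E == [set x; y])]].

Definition cubic (T : finType) (g : rel T) : Prop :=
  forall v : T, #|[set w | g v w]| = 3.

Definition perfect_matching (T : finType) (g : rel T) (M : {set {set T}}) : Prop :=
  M \subset edges g /\ forall v : T, #|[set E in M | v \in E]| = 1.

Definition cutset (T : finType) (g : rel T) (M : {set {set T}}) : Prop :=
  exists X : {set T}, X != set0 /\ ~: X != set0 /\
    M = [set E in edges g | [exists x in X, exists y in ~: X, E == [set x; y]]].

Definition perfect_matching_cut (T : finType) (g : rel T) (M : {set {set T}}) :=
  perfect_matching g M /\ cutset g M.

Definition induced_C4 (T : finType) (g : rel T) (a b c d : T) : Prop :=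
  uniq [:: a; b; c; d] /\ g a b /\ g b c /\ g c d /\ g d a /\ ~~ g a c /\ ~~ g b d.

Definition C4_vertices (T : finType) (a b c d : T) : {set T} := [set a; b; c; d].

Definition C4_edges (T : finType) (a b c d : T) : {set {set T}} :=
  [set [set a; b]; [set b; c]; [set c; d]; [set d; a]].

From mathcomp Require Import all_boot.

Set Implicit Arguments.
Unset Strict Implicit.
Unset Printing Implicit Defensive.

(* Let X be a side of the cut, so that M is the set of edges crossing X and
   every vertex has exactly one neighbour on the other side. An induced 4-cycle
   C meets M iff it is not monochromatic. If some edge xy leaves C at x, then in
   a cubic graph the neighbours of x are its two cycle neighbours and y, and
   uniqueness of the crossing neighbour shows: xy crosses iff C is
   monochromatic. An edge between C1 and C2 thus crosses iff C1 is monochromatic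
   iff C2 is, i.e. iff neither cycle meets M. *)

Definition monochromatic (T : finType) (X : {set T}) (a b c d : T) : bool :=
  [&& (a \in X) == (b \in X), (b \in X) == (c \in X) & (c \in X) == (d \in X)].

Lemma monochromatic_rot (T : finType) (X : {set T}) (a b c d : T) :
  monochromatic X b c d a = monochromatic X a b c d.
Proof.
by rewrite /monochromatic; case: (a \in X); case: (b \in X); case: (c \in X); case: (d \in X).
Qed.

Lemma C4_vertices_rot (T : finType) (a b c d : T) :
  C4_vertices b c d a = C4_vertices a b c d.
Proof. by apply/setP => v; rewrite !inE orbC -!orbA. Qed.

Lemma induced_C4_rot (T : finType) (g : rel T) (a b c d : T) :
  symmetric g -> induced_C4 g a b c d -> induced_C4 g b c d a.
Proof.
move=> gS [U [gab [gbc [gcd [gda [nac nbd]]]]]].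
split; first by rewrite -(rot_uniq 1) in U.
by do 5 split => //; rewrite gS.
Qed.

Lemma cubic_nbr (T : finType) (g : rel T) (v x y z w : T) : cubic g ->
  g v x -> g v y -> g v z -> uniq [:: x; y; z] -> g v w -> w \in [:: x; y; z].
Proof.
move=> g_cubic gvx gvy gvz xyz gvw.
have sub_nbrs : [:: x; y; z] \subset [set u | g v u].
  by apply/subsetP => u; rewrite !inE => /or3P [] /eqP ->.
have card_eq : #|[:: x; y; z]| = #|[set u | g v u]|.
  by rewrite g_cubic (card_uniqP xyz).
by rewrite ((subset_cardP card_eq sub_nbrs) w) inE.
Qed.

Lemma edges_at (T : finType) (g : rel T) (E : {set T}) (v : T) :
  symmetric g -> E \in edges g -> v \in E -> exists2 w, g v w & E = [set v; w].
Proof.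
move=> gS; rewrite inE => /existsP [x /existsP [y /andP [gxy /eqP ->]]].
rewrite !inE => /orP [] /eqP ->; first by exists y.
by exists x; rewrite 1?gS // setUC.
Qed.

Section CutEdges.

Variables (T : finType) (g : rel T) (X : {set T}) (M : {set {set T}}).
Hypothesis M_cut :
  M = [set E in edges g | [exists x in X, exists y in ~: X, E == [set x; y]]].

Lemma cut_edgeE u v : g u v -> ([set u; v] \in M) = ((u \in X) != (v \in X)).
Proof.
move=> guv; have uv_edge : [set u; v] \in edges g.
  by rewrite inE; apply/existsP; exists u; apply/existsP; exists v; rewrite guv eqxx.
rewrite M_cut inE uv_edge /=; apply/idP/idP.
- case/exists_inP=> x xX /exists_inP [y yX /eqP uv_xy].
  have : x \in [set u; v] by rewrite uv_xy !inE eqxx.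
  have : y \in [set u; v] by rewrite uv_xy !inE eqxx orbT.
  rewrite !inE in yX * => /orP [] /eqP yE /orP [] /eqP xE; subst x y;
    by move: xX yX; case: (u \in X); case: (v \in X).
- case uX: (u \in X) => /= vX.
  + by apply/exists_inP; exists u => //; apply/exists_inP; exists v; rewrite ?inE.
  + apply/exists_inP; exists v; first by rewrite (negbNE vX).
    by apply/exists_inP; exists u; rewrite ?inE ?uX // setUC.
Qed.

Lemma C4_edges_cut a b c d : g a b -> g b c -> g c d -> g d a ->
  (C4_edges a b c d :&: M != set0) = ~~ monochromatic X a b c d.
Proof.
move=> gab gbc gcd gda; apply/set0Pn/idP.
- case=> E; rewrite !inE -!orbA => /andP [/or4P [] /eqP -> ]; rewrite cut_edgeE //;
  by rewrite /monochromatic; case: (a \in X); case: (b \in X); case: (c \in X); case: (d \in X).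
- move=> not_mono.
  have : [|| (a \in X) != (b \in X), (b \in X) != (c \in X),
             (c \in X) != (d \in X) | (d \in X) != (a \in X)].
    by move: not_mono; rewrite /monochromatic;
      case: (a \in X); case: (b \in X); case: (c \in X); case: (d \in X).
  by case/or4P => cross;
    [exists [set a; b] | exists [set b; c] | exists [set c; d] | exists [set d; a]];
    rewrite inE cut_edgeE // !inE eqxx ?orbT.
Qed.

Hypothesis gI : irreflexive g.
Hypothesis gS : symmetric g.
Hypothesis M_perfect : forall v : T, #|[set E in M | v \in E]| = 1.

Lemma crossing_nbr_unique v : exists! w, g v w && ((v \in X) != (w \in X)).
Proof.
have /eqP/cards1P [E0 M_at_v] := M_perfect v.
have nbr_cut w : g v w -> ((v \in X) != (w \in X)) = ([set v; w] == E0).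
  by move=> gvw; rewrite -cut_edgeE // -in_set1 -M_at_v inE set21 andbT.
have : E0 \in [set E in M | v \in E] by rewrite M_at_v set11.
rewrite inE => /andP [E0M vE0].
have E0_edge : E0 \in edges g by move: E0M; rewrite M_cut inE => /andP [].
have [w gvw E0_vw] := edges_at gS E0_edge vE0.
exists w; split; first by rewrite gvw nbr_cut // E0_vw eqxx.
move=> w' /andP [gvw']; rewrite nbr_cut // E0_vw => /eqP/setP/(_ w').
rewrite !inE eqxx orbT => /esym/orP [/eqP w'v | /eqP //].
by rewrite w'v gI in gvw'.
Qed.

End CutEdges.

Section InducedC4.

Variables (T : finType) (g : rel T) (X : {set T}).
Hypothesis gS : symmetric g.
Hypothesis g_cubic : cubic g.
Hypothesis crossing_nbr : forall v, exists! w, g v w && ((v \in X) != (w \in X)).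

Lemma crossing_nbr_eq v w1 w2 : g v w1 -> (v \in X) != (w1 \in X) ->
  g v w2 -> (v \in X) != (w2 \in X) -> w1 = w2.
Proof.
move=> gvw1 cross1 gvw2 cross2; have [w [_ w_unique]] := crossing_nbr v.
by rewrite -(w_unique w1) ?gvw1 // -(w_unique w2) ?gvw2.
Qed.

Lemma C4_exit_crossing_at a b c d y :
  induced_C4 g a b c d -> g a y -> y \notin C4_vertices a b c d ->
  ((a \in X) != (y \in X)) = monochromatic X a b c d.
Proof.
case=> U [gab [gbc [gcd [gda _]]]] gay.
rewrite !inE !negb_or => /andP [/andP [/andP [_ yb] _] yd].
move: U; rewrite /= !inE !negb_or => /and4P [_ /andP [_ bd] _ _].
have gad : g a d by rewrite gS.
apply/idP/idP => [cross_ay | mono].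
- have same_b : (a \in X) == (b \in X).
    apply: contraT => cross_ab.
    by rewrite (crossing_nbr_eq gab cross_ab gay cross_ay) eqxx in yb.
  have same_d : (a \in X) == (d \in X).
    apply: contraT => cross_ad.
    by rewrite (crossing_nbr_eq gad cross_ad gay cross_ay) eqxx in yd.
  have same_c : (a \in X) == (c \in X).
    apply: contraT => cross_ac.
    have cross_cb : (c \in X) != (b \in X) by rewrite -(eqP same_b) eq_sym.
    have cross_cd : (c \in X) != (d \in X) by rewrite -(eqP same_d) eq_sym.
    have gcb : g c b by rewrite gS.
    by rewrite (crossing_nbr_eq gcb cross_cb gcd cross_cd) eqxx in bd.
  by rewrite /monochromatic -(eqP same_b) -(eqP same_c) -(eqP same_d) !eqxx.
- have [w [/andP [gaw cross_aw] _]] := crossing_nbr a.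
  have : w \in [:: b; d; y].
    apply: (cubic_nbr g_cubic gab gad gay) gaw.
    by rewrite /= !inE negb_or bd (eq_sym b) (eq_sym d) yb yd.
  rewrite !inE => /or3P [] /eqP w_eq //; move: cross_aw mono; rewrite w_eq /monochromatic;
    by case: (a \in X); case: (b \in X); case: (c \in X); case: (d \in X).
Qed.

Lemma C4_exit_crossing a b c d x y :
  induced_C4 g a b c d -> x \in C4_vertices a b c d -> g x y ->
  y \notin C4_vertices a b c d -> ((x \in X) != (y \in X)) = monochromatic X a b c d.
Proof.
move=> C xC gxy yC; have C' := induced_C4_rot gS C.
have C'' := induced_C4_rot gS C'; have C''' := induced_C4_rot gS C''.
move: xC; rewrite !inE -!orbA => /or4P [] /eqP x_eq; subst x.
- exact: C4_exit_crossing_at C gxy yC.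
- rewrite -monochromatic_rot; apply: C4_exit_crossing_at C' gxy _.
  by rewrite C4_vertices_rot.
- rewrite -2!monochromatic_rot; apply: C4_exit_crossing_at C'' gxy _.
  by rewrite 2!C4_vertices_rot.
- rewrite -3!monochromatic_rot; apply: C4_exit_crossing_at C''' gxy _.
  by rewrite 3!C4_vertices_rot.
Qed.

End InducedC4.

Theorem corollary4 (T : finType) (g : rel T) (M : {set {set T}})
    (a1 b1 c1 d1 a2 b2 c2 d2 : T) :
  simple_graph g -> cubic g -> perfect_matching_cut g M ->
  induced_C4 g a1 b1 c1 d1 -> induced_C4 g a2 b2 c2 d2 ->
  [disjoint C4_vertices a1 b1 c1 d1 & C4_vertices a2 b2 c2 d2] ->
  (exists x y, [/\ x \in C4_vertices a1 b1 c1 d1,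
                   y \in C4_vertices a2 b2 c2 d2 & g x y]) ->
  (C4_edges a1 b1 c1 d1 :&: M != set0) <-> (C4_edges a2 b2 c2 d2 :&: M != set0).
Proof.
move=> [gI gS] g_cubic [[_ M_perfect] [X [_ [_ M_cut]]]] C1 C2 disj [x [y [x1 y2 gxy]]].
have crossing_nbr := crossing_nbr_unique M_cut gI gS M_perfect.
have y1 : y \notin C4_vertices a1 b1 c1 d1 by rewrite (disjointFl disj y2).
have x2 : x \notin C4_vertices a2 b2 c2 d2 by rewrite (disjointFr disj x1).
have mono1 := C4_exit_crossing gS g_cubic crossing_nbr C1 x1 gxy y1.
have gyx : g y x by rewrite gS.
have mono2 := C4_exit_crossing gS g_cubic crossing_nbr C2 y2 gyx x2.
case: C1 C2 => _ [? [? [? [? _]]]] [_ [? [? [? [? _]]]]].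
by rewrite !(C4_edges_cut M_cut) // -mono1 -mono2 eq_sym.
Qed.
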